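(* For $n\geq 0$ let $D_n$ denote the $1\times n$ (one row, $n$ columns) misère \textsc{Domineering} rectangle, in which Left places vertical dominoes and Right places horizontal dominoes. Write $n=6k+r$ with $k\geq 0$, $0\leq r\leq 5$. Then, in every universe $\mathcal{U}$ (i.e. with respect to $\equiv_\mathcal{U}$ for every universe $\mathcal{U}$), $D_n$ is equal to: $k\cdot(\bar{1}0)_\#$ if $r\in\{0,1\}$; $k\cdot(\bar{1}0)_\#+\bar{1}$ if $r\in\{2,3\}$; $k\cdot(\bar{1}0)_\#+\bar{1}0$ if $r=4$; $k\cdot(\bar{1}0)_\#+\bar{2}$ if $r=5$.
   Context: Games are finite partizan games; $o(G)$ is the misère outcome class (ordered $\mathscr{L}>\mathscr{N}>\mathscr{R}$, $\mathscr{L}>\mathscr{P}>\mathscr{R}$). A universe is a set of games closed under options, disjunctive sums, conjugates, and forming $\{\mathscr{G}^L\mid\mathscr{G}^R\}$ from nonempty finite subsets of it; $G\equiv_\mathcal{U}H$ means $o(G+X)=o(H+X)$ for all $X\in\mathcal{U}$. Notation: $\bar{0}=0$, $\bar{m}=\{\cdot\mid\overline{m-1}\}$ for $m\geq1$ ($\cdot$ meaning no options); $\bar{1}0=\{\cdot\mid\bar{1},0\}$; $(\bar{1}0)_\#=\{\cdot\mid\bar{1}0\}$; $k\cdot G$ is the disjunctive sum of $k$ copies of $G$. *)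

From Stdlib Require List.
From mathcomp Require Import all_boot.

Set Implicit Arguments.
Unset Strict Implicit.
Unset Printing Implicit Defensive.

Inductive game : Type := Game : seq game -> seq game -> game.

Definition leftopts (G : game) : seq game := let: Game l _ := G in l.
Definition rightopts (G : game) : seq game := let: Game _ r := G in r.

(* Misere play: a player unable to move WINS.
   lwf G : Left, moving first in G, wins;  rwf G : Right, moving first, wins. *)
Fixpoint lwf (G : game) : bool :=
  match G with
  | Game l _ => nilp l || has (fun GL => ~~ rwf GL) l
  end
with rwf (G : game) : bool :=
  match G with
  | Game _ r => nilp r || has (fun GR => ~~ lwf GR) r
  end.

Inductive outcome : Type := OL | ON | OP | OR.

Definition o (G : game) : outcome :=
  match lwf G, rwf G with
  | true, false => OL
  | true, true => ON
  | false, false => OP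
  | false, true => OR
  end.

Fixpoint gadd (G : game) : game -> game :=
  fix gaddG (H : game) : game :=
    match G, H with
    | Game gl gr, Game hl hr =>
        Game ([seq gadd g H | g <- gl] ++ [seq gaddG h | h <- hl])
             ([seq gadd g H | g <- gr] ++ [seq gaddG h | h <- hr])
    end.

Fixpoint gconj (G : game) : game :=
  match G with
  | Game l r => Game [seq gconj x | x <- r] [seq gconj x | x <- l]
  end.

Definition universe (U : game -> Prop) : Prop :=
  [/\ (forall G GL, U G -> List.In GL (leftopts G) -> U GL),
      (forall G GR, U G -> List.In GR (rightopts G) -> U GR),
      (forall G H, U G -> U H -> U (gadd G H)),
      (forall G, U G -> U (gconj G)) &
      (forall l r : seq game, l <> [::] -> r <> [::] ->
         (forall x, List.In x l -> U x) -> (forall x, List.In x r -> U x) ->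
         U (Game l r))].

Definition equivU (U : game -> Prop) (G H : game) : Prop :=
  forall X, U X -> o (gadd G X) = o (gadd H X).

Definition gzero : game := Game [::] [::].

Fixpoint gbar (m : nat) : game :=
  match m with
  | 0 => gzero
  | m'.+1 => Game [::] [:: gbar m']
  end.

Definition gbar1_0 : game := Game [::] [:: gbar 1; gzero].

Definition gsharp : game := Game [::] [:: gbar1_0].

Fixpoint gmul (k : nat) (G : game) : game :=
  match k with
  | 0 => gzero
  | k'.+1 => gadd G (gmul k' G)
  end.

(* Domineering on a finite board given as a list of cells (x, y) = (column, row).
   The fuel bounds the number of moves; it is taken to be the number of cells,
   which is never exhausted prematurely on duplicate-free boards. *)
Definition remove2 (c d : nat * nat) (b : seq (nat * nat)) : seq (nat * nat) :=
  [seq e <- b | (e != c) && (e != d)].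

Fixpoint domin (fuel : nat) (b : seq (nat * nat)) : game :=
  match fuel with
  | 0 => gzero
  | f.+1 =>
      Game [seq domin f (remove2 c (c.1, c.2.+1) b)
             | c <- b & (c.1, c.2.+1) \in b]
           [seq domin f (remove2 c (c.1.+1, c.2) b)
             | c <- b & (c.1.+1, c.2) \in b]
  end.

Definition strip (n : nat) : seq (nat * nat) := [seq (i, 0) | i <- iota 0 n].

Definition D (n : nat) : game := domin (size (strip n)) (strip n).

(** All games below are Left-dead: Left never has a move, so only Right's moves
    shape the play.  For Left-dead games, a simulation of Right's moves in both
    directions ([rbisim]) forces equal misere outcomes against every game X
    whatsoever.  Up to [rbisim], the Left-dead sums
    of \bar1 and \bar1 0 are classified by the least and greatest number of moves
    Right can make, with canonical representatives [bars p q] that add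
    componentwise, and (\bar1 0)_# is equivalent to [bars 2 3].  A horizontal domino splits the
    1 x n strip into strips of lengths i and n - 2 - i, so by induction D n is
    [bars ((n+1)/3) (n/2)], the extreme sizes of a maximal domino packing; reading
    these values modulo 6 gives the four cases. *)

From mathcomp Require Import all_boot zify.

Set Implicit Arguments.
Unset Strict Implicit.
Unset Printing Implicit Defensive.

Lemma all_In (T : Type) (p : pred T) (s : seq T) :
  all p s <-> (forall x, List.In x s -> p x).
Proof.
elim: s => [|y s IHs] /=; first by [].
split=> [/andP [py /IHs ps] x [<-|/ps] //|ps].
by apply/andP; split; [apply: ps; left | apply/IHs => x sx; apply: ps; right].
Qed.

Lemma has_In (T : Type) (p : pred T) (s : seq T) :
  has p s <-> exists2 x, List.In x s & p x.
Proof.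
elim: s => [|y s IHs] /=; first by split=> // -[].
split=> [/orP [py|/IHs [x sx px]]|[x [<-|sx] px]].
- by exists y; [left|].
- by exists x; [right|].
- by rewrite px.
- by apply/orP; right; apply/IHs; exists x.
Qed.

Lemma In_map_cat (A B : Type) (f g : A -> B) (s t : seq A) y :
  List.In y ([seq f x | x <- s] ++ [seq g x | x <- t]) <->
  (exists2 x, List.In x s & y = f x) \/ (exists2 x, List.In x t & y = g x).
Proof.
rewrite List.in_app_iff !List.in_map_iff.
split=> [[] [x [<- xs]]|[] [x xs ->]]; [left|right|left|right]; by exists x.
Qed.

Lemma game_ind_opts (P : game -> Prop) :
  (forall G, (forall g, List.In g (leftopts G) -> P g) ->
     (forall g, List.In g (rightopts G) -> P g) -> P G) ->
  forall G, P G.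
Proof.
(* No [done] before the recursive calls: it would close goals by applying [self]
   to non-structural arguments, which the guard checker rejects. *)
move=> step; fix self 1; case=> l r; apply: step => /=.
- elim: l => [|h l IHl] g /=; first case.
  by case=> [<-|]; [exact: (self h) | exact: IHl].
- elim: r => [|h r IHr] g /=; first case.
  by case=> [<-|]; [exact: (self h) | exact: IHr].
Qed.

Lemma lwfE G : lwf G = nilp (leftopts G) || has (fun g => ~~ rwf g) (leftopts G).
Proof. by case: G. Qed.

Lemma rwfE G : rwf G = nilp (rightopts G) || has (fun g => ~~ lwf g) (rightopts G).
Proof. by case: G. Qed.

Lemma leftopts_add G X :
  leftopts (gadd G X) = [seq gadd g X | g <- leftopts G] ++ [seq gadd G x | x <- leftopts X].
Proof. by case: G; case: X. Qed.

Lemma rightopts_add G X :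
  rightopts (gadd G X) = [seq gadd g X | g <- rightopts G] ++ [seq gadd G x | x <- rightopts X].
Proof. by case: G; case: X. Qed.

Lemma nilp_rightopts_add G X :
  nilp (rightopts (gadd G X)) = nilp (rightopts G) && nilp (rightopts X).
Proof. by rewrite rightopts_add cat_nilp /nilp !size_map. Qed.

Fixpoint left_dead (G : game) : bool :=
  let: Game l r := G in nilp l && all left_dead r.

Lemma left_deadP G :
  left_dead G <-> leftopts G = [::] /\ forall g, List.In g (rightopts G) -> left_dead g.
Proof.
case: G => l r /=; rewrite -all_In.
by split=> [/andP [/nilP]|[-> ->]].
Qed.

Lemma left_dead_add G K : left_dead G -> left_dead K -> left_dead (gadd G K).
Proof.
elim/game_ind_opts: G K => G _ IHG K; elim/game_ind_opts: K => K _ IHK.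
move=> dG dK; have [lG rG] := (left_deadP G).1 dG; have [lK rK] := (left_deadP K).1 dK.
apply/left_deadP; rewrite leftopts_add rightopts_add lG lK.
split=> // y /In_map_cat [] [x xr ->]; first exact: IHG (rG x xr) dK.
exact: IHK (rK x xr).
Qed.

Lemma left_dead_gmul k G : left_dead G -> left_dead (gmul k G).
Proof. by move=> dG; elim: k => [|k IHk] //=; apply: left_dead_add. Qed.

Fixpoint rsim (G H : game) : bool :=
  let: Game _ gr := G in
  (~~ nilp gr || nilp (rightopts H)) && all (fun g => has (rsim g) (rightopts H)) gr.

Lemma rsimP G H : rsim G H <->
  (nilp (rightopts G) -> nilp (rightopts H)) /\
  (forall g, List.In g (rightopts G) -> exists2 h, List.In h (rightopts H) & rsim g h).
Proof.
case: G => l r /=.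
split=> [/andP [nil /all_In sim]|[nil sim]].
- split=> [nl|g /sim /has_In //]; by rewrite nl in nil.
- apply/andP; split; first by case: (nilp r) nil => // ->.
  by apply/all_In => g /sim h; apply/has_In.
Qed.

Lemma rsim_refl G : rsim G G.
Proof.
elim/game_ind_opts: G => G _ IHG; apply/rsimP; split=> // g gG.
by exists g; last exact: IHG.
Qed.

Lemma rsim_trans G H K : rsim G H -> rsim H K -> rsim G K.
Proof.
elim/game_ind_opts: G H K => G _ IHG H K /rsimP [nGH sGH] /rsimP [nHK sHK].
apply/rsimP; split=> [/nGH/nHK //|g gG].
have [h hH gh] := sGH g gG; have [k kK hk] := sHK h hH.
by exists k; last exact: IHG gh hk.
Qed.

Lemma rsim_add G G' H H' : rsim G H -> rsim G' H' -> rsim (gadd G G') (gadd H H').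
Proof.
elim/game_ind_opts: G G' H H' => G _ IHG G'.
elim/game_ind_opts: G' => G' _ IHG' H H' sGH sGH'.
have [nGH simGH] := (rsimP G H).1 sGH; have [nGH' simGH'] := (rsimP G' H').1 sGH'.
apply/rsimP; rewrite !nilp_rightopts_add !rightopts_add; split.
  by case/andP=> /nGH -> /nGH' ->.
move=> y /In_map_cat [] [g gG ->].
- have [h hH gh] := simGH g gG.
  by exists (gadd h H'); [apply/In_map_cat; left; exists h | exact: IHG].
- have [h hH' gh] := simGH' g gG.
  by exists (gadd H h); [apply/In_map_cat; right; exists h | exact: IHG'].
Qed.

Lemma rsim_sum_wins G H X : left_dead G -> left_dead H -> rsim G H ->
  (lwf (gadd H X) -> lwf (gadd G X)) /\ (rwf (gadd G X) -> rwf (gadd H X)).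
Proof.
elim/game_ind_opts: G H X => G _ IHG H X.
elim/game_ind_opts: X => X IHXl IHXr dG dH sGH.
have [lG rG] := (left_deadP G).1 dG; have [lH rH] := (left_deadP H).1 dH.
have [nGH simGH] := (rsimP G H).1 sGH.
split.
- rewrite !lwfE !leftopts_add lG lH /nilp /= !size_map !has_map.
  case/orP=> [-> //|/has_In [x xX Lwins]].
  apply/orP; right; apply/has_In; exists x => //.
  by apply: contra Lwins; apply: (IHXl x xX dG dH sGH).2.
- rewrite !rwfE !nilp_rightopts_add !rightopts_add !has_cat !has_map.
  case/orP=> [/andP [/nGH -> -> //]|/orP [/has_In [g gG Rwins]|/has_In [x xX Rwins]]].
  + have [h hH gh] := simGH g gG.
    apply/orP; right; apply/orP; left; apply/has_In; exists h => //.
    by apply: contra Rwins; apply: (IHG g gG h X (rG g gG) (rH h hH) gh).1.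
  + apply/orP; right; apply/orP; right; apply/has_In; exists x => //.
    by apply: contra Rwins; apply: (IHXr x xX dG dH sGH).1.
Qed.

Definition rbisim G H := rsim G H && rsim H G.

Lemma rbisim_refl G : rbisim G G.
Proof. by rewrite /rbisim rsim_refl. Qed.

Lemma rbisim_sym G H : rbisim G H -> rbisim H G.
Proof. by rewrite /rbisim andbC. Qed.

Lemma rbisim_trans G H K : rbisim G H -> rbisim H K -> rbisim G K.
Proof.
by case/andP=> GH HG /andP [HK KH]; apply/andP; split; apply: rsim_trans; eassumption.
Qed.

Lemma rbisim_add G G' H H' : rbisim G H -> rbisim G' H' -> rbisim (gadd G G') (gadd H H').
Proof. by case/andP=> GH HG /andP [GH' HG']; apply/andP; split; apply: rsim_add. Qed.

Lemma rbisim_equivU (U : game -> Prop) G H :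
  left_dead G -> left_dead H -> rbisim G H -> equivU U G H.
Proof.
move=> dG dH /andP [sGH sHG] X _.
have [LGH RGH] := rsim_sum_wins X dG dH sGH; have [LHG RHG] := rsim_sum_wins X dH dG sHG.
rewrite /o; have -> : lwf (gadd G X) = lwf (gadd H X) by apply/idP/idP.
by have -> : rwf (gadd G X) = rwf (gadd H X) by apply/idP/idP.
Qed.

(* [bars p q] represents the sum of 2p - q copies of \bar1 and q - p copies of
   \bar1 0: Right may remove a \bar1, turn a \bar1 0 into \bar1, or remove a \bar1 0. *)
Fixpoint bars (p q : nat) : game :=
  match q with
  | 0 => gzero
  | q1.+1 =>
      if p is p1.+1 then
        Game [::] ((if q < 2 * p then [:: bars p1 q1] else [::]) ++
                   (if p < q then bars p q1 :: (if q1 is q2.+1 then [:: bars p1 q2] else [::])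
                    else [::]))
      else gzero
  end.

Definition bars_valid p q := p <= q <= 2 * p.

Definition bars_opt p q a b : Prop :=
  (q < 2 * p /\ a = p - 1 /\ b = q - 1) \/ (p < q /\ a = p /\ b = q - 1) \/
  (p < q /\ a = p - 1 /\ b = q - 2).

Lemma exists_bars_opt p q (P : nat -> nat -> Prop) :
  (q < 2 * p /\ P (p - 1) (q - 1)) \/ (p < q /\ P p (q - 1)) \/ (p < q /\ P (p - 1) (q - 2)) ->
  exists a b, bars_opt p q a b /\ P a b.
Proof.
case=> [[lt_q Pab]|[[lt_p Pab]|[lt_p Pab]]].
- by exists (p - 1), (q - 1); split=> //; left.
- by exists p, (q - 1); split=> //; right; left.
- by exists (p - 1), (q - 2); split=> //; right; right.
Qed.

Lemma bars_opt_valid p q a b :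
  bars_valid p q -> bars_opt p q a b -> bars_valid a b /\ b < q.
Proof. by rewrite /bars_valid /bars_opt; lia. Qed.

Lemma bars0 q : bars 0 q = gzero.
Proof. by case: q. Qed.

Lemma bars_rightopts p q g : bars_valid p q ->
  List.In g (rightopts (bars p q)) <-> exists a b, bars_opt p q a b /\ g = bars a b.
Proof.
rewrite /bars_valid /bars_opt.
case: q p => [|q1] [|p1] //= v; try by split=> [[]|[a [b]]]; lia.
rewrite List.in_app_iff; split.
- case.
  + case: ifP => //= lt_q [<-|//]; exists p1, q1; split=> //; left; lia.
  + case: ifP => //= lt_p [<-|]; first by exists p1.+1, q1; split=> //; right; left; lia.
    case: q1 lt_p v => [|q2] //= lt_p v [<-|//].
    by exists p1, q2; split=> //; right; right; lia.
- case=> a [b [o ->]]; rewrite !subSS !subn0 in o.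
  case: o => [[lt [-> ->]]|[[lt [-> ->]]|[lt [-> ->]]]]; [left|right|right]; rewrite lt.
  + by left.
  + by left.
  + by case: q1 v lt => [|q2] v lt; [lia | rewrite subn1; right; left].
Qed.

Lemma bars_nilp p q : bars_valid p q -> nilp (rightopts (bars p q)) = (p == 0).
Proof.
move=> v; have [->|p_gt0] := posnP p; first by rewrite bars0.
have [a [b [o _]]] : exists a b, bars_opt p q a b /\ True.
  by apply: exists_bars_opt; move: v; rewrite /bars_valid; lia.
have : List.In (bars a b) (rightopts (bars p q)) by apply/(bars_rightopts _ v); exists a, b.
by case: (rightopts _).
Qed.

Lemma left_dead_bars p q : left_dead (bars p q).
Proof.
elim/ltn_ind: q p => -[|q1] IH [|p1] //=.
have IH1 p : left_dead (bars p q1) by apply: IH.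
rewrite all_cat; apply/andP; split; first by case: ifP => //= _; rewrite IH1.
case: ifP => //= _; rewrite IH1 /=; case: q1 IH IH1 => [|q2] IH _ //=.
by rewrite IH.
Qed.

Lemma rsim_bars p q p' q' : bars_valid p q -> bars_valid p' q' -> p' <= p -> q <= q' ->
  rsim (bars p q) (bars p' q').
Proof.
elim/ltn_ind: q p p' q' => q IH p p' q' v v' le_p le_q.
have [p0|p_gt0] := posnP p; first by rewrite p0 bars0 (_ : p' = 0) ?bars0 //; lia.
apply/rsimP; split; first by rewrite bars_nilp // => /eqP p0; rewrite p0 in p_gt0.
move=> _ /(bars_rightopts _ v) [a [b [o ->]]].
have [vab lt_b] := bars_opt_valid v o.
have [c [d [o' [le_c le_d]]]] : exists c d, bars_opt p' q' c d /\ c <= a /\ b <= d.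
  by apply: exists_bars_opt; move: v v' o; rewrite /bars_valid /bars_opt; lia.
have [vcd _] := bars_opt_valid v' o'.
exists (bars c d); last exact: IH.
by apply/(bars_rightopts _ v'); exists c, d.
Qed.

Lemma bars_opt_add p1 q1 p2 q2 a b : bars_valid p1 q1 -> bars_valid p2 q2 ->
  bars_opt p1 q1 a b ->
  exists c d, bars_opt (p1 + p2) (q1 + q2) c d /\ c <= a + p2 /\ b + q2 <= d.
Proof.
by move=> v1 v2 o; apply: exists_bars_opt; move: v1 v2 o; rewrite /bars_valid /bars_opt; lia.
Qed.

Lemma bars_opt_split p1 q1 p2 q2 c d : bars_valid p1 q1 -> bars_valid p2 q2 ->
  bars_opt (p1 + p2) (q1 + q2) c d ->
  (exists a b, bars_opt p1 q1 a b /\ a + p2 <= c /\ d <= b + q2) \/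
  (exists a b, bars_opt p2 q2 a b /\ p1 + a <= c /\ d <= q1 + b).
Proof.
rewrite /bars_valid => v1 v2 [[lt [-> ->]]|[[lt [-> ->]]|[lt [-> ->]]]].
- by have [lt1|ge1] := ltnP q1 (2 * p1); [left|right]; apply: exists_bars_opt; lia.
- by have [lt1|ge1] := ltnP p1 q1; [left|right]; apply: exists_bars_opt; lia.
- by have [lt1|ge1] := ltnP p1 q1; [left|right]; apply: exists_bars_opt; lia.
Qed.

Lemma bars_valid_add p1 q1 p2 q2 :
  bars_valid p1 q1 -> bars_valid p2 q2 -> bars_valid (p1 + p2) (q1 + q2).
Proof. by rewrite /bars_valid; lia. Qed.

Lemma rsim_add_bars p1 q1 p2 q2 : bars_valid p1 q1 -> bars_valid p2 q2 ->
  rsim (gadd (bars p1 q1) (bars p2 q2)) (bars (p1 + p2) (q1 + q2)).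
Proof.
have [N] := ubnP (q1 + q2); elim: N p1 q1 p2 q2 => // N IH p1 q1 p2 q2 lt_N v1 v2.
have v := bars_valid_add v1 v2.
apply/rsimP; rewrite nilp_rightopts_add !bars_nilp //; split.
  by case/andP=> /eqP-> /eqP->.
rewrite rightopts_add => y /In_map_cat [] [g g_opt ->{y}].
- have [a [b [o ->{g g_opt}]]] := (bars_rightopts _ v1).1 g_opt.
  have [c [d [o' [le_c le_d]]]] := bars_opt_add v1 v2 o.
  have [vab lt_b] := bars_opt_valid v1 o; have [vcd _] := bars_opt_valid v o'.
  exists (bars c d); first by apply/(bars_rightopts _ v); exists c, d.
  by apply: rsim_trans (IH _ _ _ _ _ vab v2) (rsim_bars (bars_valid_add vab v2) vcd _ _); lia.
- have [a [b [o ->{g g_opt}]]] := (bars_rightopts _ v2).1 g_opt.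
  have [c [d [o' [le_c le_d]]]] := bars_opt_add v2 v1 o.
  rewrite [p2 + _]addnC [q2 + _]addnC in o'.
  have [vab lt_b] := bars_opt_valid v2 o; have [vcd _] := bars_opt_valid v o'.
  exists (bars c d); first by apply/(bars_rightopts _ v); exists c, d.
  by apply: rsim_trans (IH _ _ _ _ _ v1 vab) (rsim_bars (bars_valid_add v1 vab) vcd _ _); lia.
Qed.

Lemma rsim_bars_add p1 q1 p2 q2 : bars_valid p1 q1 -> bars_valid p2 q2 ->
  rsim (bars (p1 + p2) (q1 + q2)) (gadd (bars p1 q1) (bars p2 q2)).
Proof.
have [N] := ubnP (q1 + q2); elim: N p1 q1 p2 q2 => // N IH p1 q1 p2 q2 lt_N v1 v2.
have v := bars_valid_add v1 v2.
apply/rsimP; rewrite nilp_rightopts_add !bars_nilp // addn_eq0; split=> [//|g].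
move=> /(bars_rightopts _ v) [c [d [o ->{g}]]]; have [vcd _] := bars_opt_valid v o.
rewrite rightopts_add.
case: (bars_opt_split v1 v2 o) => [[a [b [o' [le_c le_d]]]]|[a [b [o' [le_c le_d]]]]].
- have [vab lt_b] := bars_opt_valid v1 o'.
  exists (gadd (bars a b) (bars p2 q2)).
    by apply/In_map_cat; left; exists (bars a b) => //; apply/(bars_rightopts _ v1); exists a, b.
  by apply: rsim_trans (rsim_bars vcd (bars_valid_add vab v2) _ _) (IH _ _ _ _ _ vab v2); lia.
- have [vab lt_b] := bars_opt_valid v2 o'.
  exists (gadd (bars p1 q1) (bars a b)).
    by apply/In_map_cat; right; exists (bars a b) => //; apply/(bars_rightopts _ v2); exists a, b.
  by apply: rsim_trans (rsim_bars vcd (bars_valid_add v1 vab) _ _) (IH _ _ _ _ _ v1 vab); lia.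
Qed.

Lemma bars_add p1 q1 p2 q2 : bars_valid p1 q1 -> bars_valid p2 q2 ->
  rbisim (gadd (bars p1 q1) (bars p2 q2)) (bars (p1 + p2) (q1 + q2)).
Proof. by move=> v1 v2; rewrite /rbisim rsim_add_bars ?rsim_bars_add. Qed.

Lemma gmul_gsharp k : rbisim (gmul k gsharp) (bars (2 * k) (3 * k)).
Proof.
have gsharp_bars : rbisim gsharp (bars 2 3) by [].
elim: k => [|k IHk] //; rewrite !mulnS.
apply: rbisim_trans (rbisim_add gsharp_bars IHk) (bars_add _ _) => //.
by rewrite /bars_valid; lia.
Qed.

Lemma neq_right (c : nat * nat) : c != (c.1.+1, c.2) :> nat * nat.
Proof. by case: c => x y; apply/eqP; case; lia. Qed.

Lemma neq_up (c : nat * nat) : c != (c.1, c.2.+1) :> nat * nat.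
Proof. by case: c => x y; apply/eqP; case; lia. Qed.

Lemma size_remove2 (c d : nat * nat) (b : seq (nat * nat)) :
  c \in b -> d \in b -> c != d -> (size (remove2 c d b)).+2 <= size b.
Proof.
move=> cb db cd; rewrite /remove2 size_filter -(count_predC [pred e | (e != c) && (e != d)]).
rewrite -addn2 leq_add2l.
have -> : count (predC [pred e | (e != c) && (e != d)]) b = count (pred1 c) b + count (pred1 d) b.
  rewrite -count_predUI (@eq_count _ (predI _ _) pred0) ?count_pred0 ?addn0.
    by apply: eq_count => e /=; rewrite negb_and !negbK.
  by move=> e /=; apply/andP=> -[/eqP-> /eqP dc]; rewrite dc eqxx in cd.
by rewrite -addn1 -add1n leq_add // -has_count has_pred1.
Qed.

Lemma domin_fuel f f' b : size b <= f -> size b <= f' -> domin f b = domin f' b.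
Proof.
elim: f f' b => [|f IH] [|f'] b; rewrite ?leqn0 => fb f'b.
- by [].
- by rewrite (nilP fb).
- by rewrite (nilP f'b).
have le_fuel g (c d : nat * nat) : c \in b -> d \in b -> c != d ->
    size b <= g.+1 -> size (remove2 c d b) <= g.
  by move=> cb db cd bg; rewrite -ltnS (leq_trans _ bg) // ltnW // size_remove2.
rewrite /=; congr Game; apply/eq_in_map => c; rewrite mem_filter => /andP [db cb];
  by apply: IH; apply: le_fuel cb db _ _; rewrite ?neq_up ?neq_right.
Qed.

Definition shift s (c : nat * nat) : nat * nat := (c.1 + s, c.2).

Lemma shift_inj s : injective (shift s).
Proof. by move=> [x y] [x' y'] [/addIn-> ->]. Qed.

Lemma remove2_map (h : nat * nat -> nat * nat) c d b : injective h ->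
  remove2 (h c) (h d) (map h b) = map h (remove2 c d b).
Proof.
move=> inj_h; rewrite /remove2 filter_map; congr map.
by apply: eq_filter => e /=; rewrite !(inj_eq inj_h).
Qed.

Lemma domin_shift s f b : domin f (map (shift s) b) = domin f b.
Proof.
elim: f b => [|f IH] b //=.
have mem_shift c : (shift s c \in map (shift s) b) = (c \in b) by apply/mem_map/shift_inj.
congr Game; rewrite filter_map -map_comp.
- rewrite (eq_filter (a2 := fun c => (c.1, c.2.+1) \in b)) => [|c];
    last exact: mem_shift (c.1, c.2.+1).
  apply: eq_map => c /=.
  by rewrite -[(_, _.+1)]/(shift s (c.1, c.2.+1)) remove2_map ?IH //; apply: shift_inj.
- rewrite (eq_filter (a2 := fun c => (c.1.+1, c.2) \in b)) => [|c];
    last exact: mem_shift (c.1.+1, c.2).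
  apply: eq_map => c /=.
  by rewrite -[(_.+1, _)]/(shift s (c.1.+1, c.2)) remove2_map ?IH //; apply: shift_inj.
Qed.

Definition single_row (b : seq (nat * nat)) := all (fun c => c.2 == 0) b.

Definition separated (b1 b2 : seq (nat * nat)) := {in b1 & b2, forall c d, c.1.+1 < d.1}.

Lemma game_eta G : G = Game (leftopts G) (rightopts G).
Proof. by case: G. Qed.

Lemma leftopts_domin f b : single_row b -> leftopts (domin f b) = [::].
Proof.
case: f => //= f /allP rb; rewrite (eq_in_filter (a2 := pred0)) ?filter_pred0 // => c cb.
by apply/negbTE/negP => /rb; rewrite (eqP (rb c cb)).
Qed.

Lemma rightopts_domin f b : rightopts (domin f.+1 b) =
  [seq domin f (remove2 c (c.1.+1, c.2) b) | c <- b & (c.1.+1, c.2) \in b].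
Proof. by []. Qed.

Lemma remove2_cat c d b1 b2 : remove2 c d (b1 ++ b2) = remove2 c d b1 ++ remove2 c d b2.
Proof. exact: filter_cat. Qed.

Lemma remove2_id c d b : c \notin b -> d \notin b -> remove2 c d b = b.
Proof.
move=> cb db; apply/all_filterP/allP => e eb.
by apply/andP; split; [apply: contraNneq cb => <- | apply: contraNneq db => <-].
Qed.

Lemma single_row_remove2 c d b : single_row b -> single_row (remove2 c d b).
Proof. by move=> /allP rb; apply/allP => e; rewrite mem_filter => /andP [_ /rb]. Qed.

Lemma separated_remove2l c d b1 b2 : separated b1 b2 -> separated (remove2 c d b1) b2.
Proof. by move=> sep x y; rewrite mem_filter => /andP [_]; apply: sep. Qed.

Lemma separated_remove2r c d b1 b2 : separated b1 b2 -> separated b1 (remove2 c d b2).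
Proof. by move=> sep x y xb1; rewrite mem_filter => /andP [_]; apply: sep. Qed.

Lemma domin_cat f b1 b2 : single_row b1 -> single_row b2 -> separated b1 b2 ->
  size b1 + size b2 <= f -> domin f (b1 ++ b2) = gadd (domin f b1) (domin f b2).
Proof.
elim: f b1 b2 => [|f IH] b1 b2 r1 r2 sep.
  by rewrite leqn0 addn_eq0 => /andP [/nilP-> /nilP->].
move=> le_f; have r12 : single_row (b1 ++ b2) by rewrite /single_row all_cat; apply/andP.
have notin2 c : c \in b1 -> c \notin b2 by move=> cb1; apply/negP => /(sep _ _ cb1); lia.
have notin1 c : c \in b2 -> c \notin b1 by move=> cb2; apply/negP => /sep /(_ cb2); lia.
have right_notin2 c : c \in b1 -> (c.1.+1, c.2) \notin b2.
  by move=> cb1; apply/negP => /(sep _ _ cb1) /=; lia.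
have right_notin1 c : c \in b2 -> (c.1.+1, c.2) \notin b1.
  by move=> cb2; apply/negP => /sep /(_ cb2) /=; lia.
rewrite [LHS]game_eta [RHS]game_eta leftopts_add rightopts_add !leftopts_domin //.
rewrite !rightopts_domin filter_cat map_cat -!map_comp; congr (Game _ (_ ++ _)).
- rewrite (eq_in_filter (a2 := fun c => (c.1.+1, c.2) \in b1)) => [|c cb1]; last first.
    by rewrite mem_cat (negbTE (right_notin2 c cb1)) orbF.
  apply/eq_in_map => c; rewrite mem_filter /comp => /andP [nb1 cb1].
  have size_b1 := size_remove2 cb1 nb1 (neq_right c).
  rewrite remove2_cat (remove2_id (notin2 _ cb1) (notin2 _ nb1)) IH //.
  + by congr gadd; apply: domin_fuel; lia.
  + exact: single_row_remove2.
  + exact: separated_remove2l.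
  + by rewrite -ltnS -addSn (leq_trans _ le_f) // leq_add2r ltnW.
- rewrite (eq_in_filter (a2 := fun c => (c.1.+1, c.2) \in b2)) => [|c cb2]; last first.
    by rewrite mem_cat (negbTE (right_notin1 c cb2)).
  apply/eq_in_map => c; rewrite mem_filter /comp => /andP [nb2 cb2].
  have size_b2 := size_remove2 cb2 nb2 (neq_right c).
  rewrite remove2_cat (remove2_id (notin1 _ cb2) (notin1 _ nb2)) IH //.
  + by congr gadd; apply: domin_fuel; lia.
  + exact: single_row_remove2.
  + exact: separated_remove2r.
  + by rewrite -ltnS -addnS (leq_trans _ le_f) // leq_add2l ltnW.
Qed.

Lemma mem_strip x y n : ((x, y) \in strip n) = (y == 0) && (x < n).
Proof.
apply/mapP/andP => [[i] | [/eqP-> x_lt]]; first by rewrite mem_iota => /andP [_ i_lt] [-> ->].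
by exists x; rewrite // mem_iota.
Qed.

Lemma size_strip n : size (strip n) = n.
Proof. by rewrite size_map size_iota. Qed.

Lemma single_row_strip n : single_row (strip n).
Proof. by apply/allP => _ /mapP [i _ ->]. Qed.

Lemma single_row_shift s b : single_row b -> single_row (map (shift s) b).
Proof. by move=> /allP rb; apply/allP => _ /mapP [c /rb c2 ->]. Qed.

Lemma D_domin n : D n = domin n (strip n).
Proof. by rewrite /D size_strip. Qed.

Lemma strip_split i j :
  strip (i + j.+2) = strip i ++ [:: (i, 0); (i.+1, 0)] ++ map (shift i.+2) (strip j).
Proof.
rewrite /strip iotaD map_cat add0n /= -[in iota i.+2 j](addn0 i.+2) iotaDl -!map_comp.
by congr (_ ++ [:: _, _ & _]); apply: eq_map => x; rewrite /shift /= addnC.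
Qed.

Lemma remove_domino_strip i j :
  remove2 (i, 0) (i.+1, 0) (strip (i + j.+2)) = strip i ++ map (shift i.+2) (strip j).
Proof.
have notin_shifted x : x <= i.+1 -> (x, 0) \notin map (shift i.+2) (strip j).
  by move=> x_le; apply/mapP => -[[z w] _ [x_eq]]; lia.
rewrite strip_split !remove2_cat {2}/remove2 /= !eqxx andbF /=.
by rewrite !remove2_id ?mem_strip ?notin_shifted ?ltnn //; lia.
Qed.

Lemma separated_strip i j : separated (strip i) (map (shift i.+2) (strip j)).
Proof.
by move=> [x y] d; rewrite mem_strip => /andP [_ x_lt] /mapP [[z w] _ ->] /=; lia.
Qed.

Lemma D_split n : D n = Game [::] [seq gadd (D i) (D (n - 2 - i)) | i <- iota 0 (n - 1)].
Proof.
case: n => [|m]; first by [].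
rewrite D_domin [LHS]game_eta leftopts_domin ?single_row_strip // subn1 succnK; congr Game.
rewrite rightopts_domin [X in filter _ X]/strip filter_map -map_comp.
rewrite (eq_in_filter (a2 := fun i => i < m)) => [|i _]; last by rewrite /= mem_strip.
have -> : [seq i <- iota 0 m.+1 | i < m] = iota 0 m.
  rewrite -addn1 iotaD filter_cat /= ltnn cats0.
  by apply/all_filterP/allP => i; rewrite mem_iota.
apply/eq_in_map => i; rewrite mem_iota /comp => /andP [_ i_lt].
have -> : strip m.+1 = strip (i + (m.+1 - 2 - i).+2) by congr strip; lia.
rewrite remove_domino_strip domin_cat ?single_row_shift ?single_row_strip //.
- by rewrite domin_shift !D_domin; congr gadd; apply: domin_fuel; rewrite size_strip; lia.
- exact: separated_strip.
- by rewrite size_map !size_strip; lia.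
Qed.

Lemma In_mem (T : eqType) (x : T) s : List.In x s <-> x \in s.
Proof.
elim: s => [|y s IHs] //=; rewrite in_cons.
split=> [[->|/IHs ->]|/orP [/eqP->|/IHs]]; rewrite ?eqxx ?orbT; auto.
Qed.

Lemma rightopts_D n y :
  List.In y (rightopts (D n)) <-> exists2 i, i < n - 1 & y = gadd (D i) (D (n - 2 - i)).
Proof.
rewrite D_split /= List.in_map_iff.
split=> [[i [<- /In_mem]]|[i i_lt ->]]; rewrite ?mem_iota.
- by exists i.
- by exists i; split=> //; apply/In_mem; rewrite mem_iota.
Qed.

Lemma left_dead_D n : left_dead (D n).
Proof.
elim/ltn_ind: n => n IH; apply/left_deadP; split; first by rewrite D_split.
by move=> _ /rightopts_D [i i_lt ->]; apply: left_dead_add; apply: IH; lia.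
Qed.

(* The fewest and the most dominoes in a maximal packing of the 1 x n strip. *)
Definition min_dominoes n := n.+1 %/ 3.
Definition max_dominoes n := n %/ 2.

Lemma bars_valid_dominoes n : bars_valid (min_dominoes n) (max_dominoes n).
Proof. by rewrite /bars_valid /min_dominoes /max_dominoes; lia. Qed.

Lemma dominoes_opt_join n i : i < n - 1 -> exists c d,
  bars_opt (min_dominoes n) (max_dominoes n) c d /\
  c <= min_dominoes i + min_dominoes (n - 2 - i) /\
  max_dominoes i + max_dominoes (n - 2 - i) <= d.
Proof. by move=> i_lt; apply: exists_bars_opt; rewrite /min_dominoes /max_dominoes; lia. Qed.

Lemma dominoes_opt_split n c d : 1 < n -> bars_opt (min_dominoes n) (max_dominoes n) c d ->
  exists2 i, i < n - 1 & min_dominoes i + min_dominoes (n - 2 - i) <= c /\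
                         d <= max_dominoes i + max_dominoes (n - 2 - i).
Proof.
rewrite /bars_opt /min_dominoes /max_dominoes => n_gt1.
case=> [[lt_q [-> ->]]|[[lt_p [-> ->]]|[lt_p [-> ->]]]]; last by exists 1; lia.
  have [n_1mod3|] := eqVneq (n %% 3) 1; last by exists 0; lia.
  by case/boolP: (odd n) => n_odd; [exists 1 | exists 4]; lia.
by exists 0; lia.
Qed.

Lemma rsim_D_bars n : rsim (D n) (bars (min_dominoes n) (max_dominoes n)).
Proof.
elim/ltn_ind: n => -[|[|m]] IH; [by [] | by [] | set n := m.+2].
have v := bars_valid_dominoes n.
apply/rsimP; split=> [|_ /rightopts_D [i i_lt ->]]; first by rewrite D_split.
have [c [d [o [le_c le_d]]]] := dominoes_opt_join i_lt.
have [vcd _] := bars_opt_valid v o.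
exists (bars c d); first by apply/(bars_rightopts _ v); exists c, d.
apply: rsim_trans (rsim_add (IH i _) (IH (n - 2 - i) _)) _; try lia.
apply: rsim_trans (rsim_add_bars (bars_valid_dominoes _) (bars_valid_dominoes _)) _.
exact: rsim_bars (bars_valid_add (bars_valid_dominoes _) (bars_valid_dominoes _)) vcd le_c le_d.
Qed.

Lemma rsim_bars_D n : rsim (bars (min_dominoes n) (max_dominoes n)) (D n).
Proof.
elim/ltn_ind: n => -[|[|m]] IH; [by [] | by [] | set n := m.+2].
have v := bars_valid_dominoes n.
apply/rsimP; split=> [|_ /(bars_rightopts _ v) [c [d [o ->]]]].
  by rewrite bars_nilp // /min_dominoes => /eqP p0; exfalso; lia.
have [i i_lt [le_c le_d]] := dominoes_opt_split (isT : 1 < n) o.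
have [vcd _] := bars_opt_valid v o.
exists (gadd (D i) (D (n - 2 - i))); first by apply/rightopts_D; exists i.
apply: rsim_trans _ (rsim_add (IH i _) (IH (n - 2 - i) _)); try lia.
apply: rsim_trans _ (rsim_bars_add (bars_valid_dominoes _) (bars_valid_dominoes _)).
exact: rsim_bars vcd (bars_valid_add (bars_valid_dominoes _) (bars_valid_dominoes _)) le_c le_d.
Qed.

Lemma rbisim_D_bars n : rbisim (D n) (bars (min_dominoes n) (max_dominoes n)).
Proof. by rewrite /rbisim rsim_D_bars rsim_bars_D. Qed.

Lemma min_dominoes_6k k r : min_dominoes (6 * k + r) = 2 * k + min_dominoes r.
Proof. by rewrite /min_dominoes; lia. Qed.

Lemma max_dominoes_6k k r : max_dominoes (6 * k + r) = 3 * k + max_dominoes r.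
Proof. by rewrite /max_dominoes; lia. Qed.

Lemma equivU_D_6k (U : game -> Prop) k r G : left_dead G ->
  rbisim G (bars (2 * k + min_dominoes r) (3 * k + max_dominoes r)) ->
  equivU U (D (6 * k + r)) G.
Proof.
rewrite -min_dominoes_6k -max_dominoes_6k => dG GB.
exact: rbisim_equivU (left_dead_D _) dG (rbisim_trans (rbisim_D_bars _) (rbisim_sym GB)).
Qed.

Lemma equivU_D_gsharp (U : game -> Prop) k r :
  min_dominoes r = 0 -> max_dominoes r = 0 -> equivU U (D (6 * k + r)) (gmul k gsharp).
Proof.
move=> min0 max0; apply: equivU_D_6k; first exact: left_dead_gmul.
by rewrite min0 max0 !addn0; apply: gmul_gsharp.
Qed.

Lemma equivU_D_gsharp_add (U : game -> Prop) k r :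
  equivU U (D (6 * k + r)) (gadd (gmul k gsharp) (bars (min_dominoes r) (max_dominoes r))).
Proof.
apply: equivU_D_6k; first by apply: left_dead_add (left_dead_gmul _ _) (left_dead_bars _ _).
by apply: rbisim_trans (rbisim_add (gmul_gsharp k) (rbisim_refl _)) (bars_add _ _);
  rewrite ?bars_valid_dominoes // /bars_valid; lia.
Qed.

Theorem mainTheorem8 (U : game -> Prop) (n k r : nat) :
  universe U -> r <= 5 -> n = 6 * k + r ->
  [/\ (r = 0 \/ r = 1) -> equivU U (D n) (gmul k gsharp),
      (r = 2 \/ r = 3) -> equivU U (D n) (gadd (gmul k gsharp) (gbar 1)),
      r = 4 -> equivU U (D n) (gadd (gmul k gsharp) gbar1_0) &
      r = 5 -> equivU U (D n) (gadd (gmul k gsharp) (gbar 2))].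
Proof.
(* For r = 2, ..., 5, [bars (min_dominoes r) (max_dominoes r)] computes to
   \bar1, \bar1, \bar1 0 and \bar2. *)
move=> _ _ ->; split.
- by case=> ->; apply: equivU_D_gsharp.
- by case=> ->; apply: equivU_D_gsharp_add.
- by move=> ->; apply: equivU_D_gsharp_add.
- by move=> ->; apply: equivU_D_gsharp_add.
Qed.
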